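(* Let $F$ be a distribution function on $\mathbb{R}$ satisfying (A1), with median $\theta = F^{-1}(1/2)$, let $0 \le \varepsilon < 1/2$, let $n \ge 1$, and let $k$ be an integer with $0 \le k$ and $k+1 \le n-k$. For $G \in \mathcal{F}_\varepsilon(F)$ let $X_n = (x_1,\dots,x_n)$ be an i.i.d. sample from $G$ with order statistics $x_{(1)} \le \dots \le x_{(n)}$. Then: (a) $$\inf_{G \in \mathcal{F}_\varepsilon(F)} P_G\big(x_{(k+1)} \le \theta < x_{(n-k)}\big) = 1 - \alpha^*(n,k,\varepsilon).$$ (b) The infimum in (a) is attained by $G = (1-\varepsilon)F + \varepsilon H$ for any distribution $H$ that places all its mass to the left of $\theta$ (i.e. $H((-\infty,\theta]) = 1$) or all its mass to the right of $\theta$ (i.e. $H((\theta,\infty)) = 1$).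
   Context: Assumption (A1): $F$ is a continuous distribution function with a unique median $\theta(F) = F^{-1}(1/2)$. For $0 \le \varepsilon < 1/2$, the contamination neighborhood of $F$ is $\mathcal{F}_\varepsilon(F) = \{G : G = (1-\varepsilon)F + \varepsilon H,\ H \text{ an arbitrary distribution on } \mathbb{R}\}$. For integers $n \ge 1$, $k \ge 0$ and $0 \le \varepsilon < 1/2$, define $\alpha^*(n,k,\varepsilon) = 1 - P(k < Z_n < n-k)$, where $Z_n \sim \mathrm{Binomial}(n,(1-\varepsilon)/2)$. *)

From HB Require Import structures.
From mathcomp Require Import all_boot all_order all_algebra.
From mathcomp Require Import all_classical all_reals all_analysis.
Set Implicit Arguments. Unset Strict Implicit. Unset Printing Implicit Defensive.
Import Order.TTheory GRing.Theory Num.Theory.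
Import numFieldNormedType.Exports.
Local Open Scope classical_set_scope.
Local Open Scope ring_scope.

Section defs.
Context {R : realType}.

Definition cdf (mu : probability R R) (x : R) : R := fine (mu [set y | y <= x]).

Definition A1_median (mu : probability R R) (theta : R) : Prop :=
  continuous (cdf mu : R -> R) /\ (forall x, cdf mu x = 2^-1 <-> x = theta).

Definition is_contam (eps : R) (F H G : probability R R) : Prop :=
  forall A : set R, measurable A ->
    G A = ((1 - eps)%:E * F A + eps%:E * H A)%E.

Definition in_contam_nbhd (eps : R) (F G : probability R R) : Prop :=
  exists H : probability R R, is_contam eps F H G.

(* n-fold iterated integral w.r.t. G of f (x_1, ..., x_n);
   for f the indicator of a Borel set A of R^n, this is G^{(x) n}(A),
   the probability of A under an i.i.d. sample of size n from G. *)
Fixpoint iid_int (G : probability R R) (m : nat) (f : seq R -> \bar R) : \bar R :=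
  match m with
  | 0%N => f [::]
  | m'.+1 => (\int[G]_x iid_int G m' (fun s => f (x :: s)))%E
  end.

Definition iid_prob (G : probability R R) (n : nat) (E : seq R -> bool) : \bar R :=
  iid_int G n (fun s => (if E s then 1 else 0)%E).

Definition order_stat (s : seq R) (j : nat) : R :=
  nth 0 (sort (fun x y : R => x <= y) s) j.-1.

Definition ci_event (n k : nat) (theta : R) (s : seq R) : bool :=
  (order_stat s k.+1 <= theta) && (theta < order_stat s (n - k)%N).

Definition alpha_star (n k : nat) (eps : R) : R :=
  1 - fine (binomial_prob n ((1 - eps) / 2) [set j : nat | (k < j < n - k)%N]).

End defs.

From HB Require Import structures.
From mathcomp Require Import all_boot all_order all_algebra.
From mathcomp Require Import all_classical all_reals all_analysis.
From mathcomp Require Import zify ring lra.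
From mathcomp Require Import polyrcf measurable_realfun.
Import Order.TTheory GRing.Theory Num.Theory.
Local Open Scope classical_set_scope.
Local Open Scope ring_scope.

(* The event x_(k+1) <= theta < x_(n-k) says that the number of sample points
   below theta lies strictly between k and n - k; this number is Binomial(n, p)
   with p = G(-oo, theta].  For G = (1 - eps) F + eps H one has
   p = (1 - eps)/2 + eps H(-oo, theta], which ranges over [(1 - eps)/2, (1 + eps)/2].
   The coverage g(p) = P(k < Bin(n, p) < n - k) is symmetric about 1/2 and
   nondecreasing on [0, 1/2], because its derivative there is
   n (b_{n-1,p}(k) - b_{n-1,p}(n-1-k)) >= 0.  So g is smallest at the two
   endpoints, which are reached exactly when H puts all its mass on one side
   of theta. *)

Lemma sorted_nth_le_count d (T : orderType d) (x0 th : T) (t : seq T) i :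
  sorted <=%O t -> (i < size t)%N ->
  (nth x0 t i <= th)%O = (i < count (fun x => x <= th)%O t)%N.
Proof.
elim: t i => [//|x t IH] i /= x_t; have t_sorted := path_sorted x_t.
have x_le_t : all (fun y => x <= y)%O t := order_path_min le_trans x_t.
have [x_th|th_x] := leP x th.
  by case: i => [|i] //= i_lt; rewrite add1n ltnS IH.
have -> : count (fun x => x <= th)%O t = 0%N.
  rewrite (@eq_in_count _ _ pred0) ?count_pred0 // => y y_t /=.
  exact/lt_geF/(lt_le_trans th_x)/(allP x_le_t).
rewrite add0n ltn0 => i_lt; apply/lt_geF/(lt_le_trans th_x).
by case: i i_lt => [|i] //= i_lt; apply: (allP x_le_t); exact: mem_nth.
Qed.

Lemma ci_eventE (R : realType) (th : R) n k (s : seq R) :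
  size s = n -> (k.+1 <= n - k)%N ->
  ci_event n k th s = (k < count (fun x => (x <= th)%R) s < n - k)%N.
Proof.
move=> size_s hk; rewrite /ci_event /order_stat.
have t_sorted := sort_sorted (@le_total _ R) s.
have size_t : size (sort (fun x y : R => x <= y) s) = n by rewrite size_sort.
rewrite ltNge !sorted_nth_le_count ?size_t ?count_sort //; try lia.
by rewrite -leqNgt; congr andb; case: (n - k)%N hk.
Qed.

Section bernstein.
Context {T : comNzRingType}.
Implicit Types (p : T) (h : nat -> T).

Definition bernstein_basis m p j : T := p ^+ j * (1 - p) ^+ (m - j) *+ 'C(m, j).

(* [bernstein m p h] is the expectation of [h Z] for [Z ~ Binomial(m, p)]. *)
Definition bernstein m p h : T := \sum_(j < m.+1) bernstein_basis m p j * h j.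

Lemma bernstein_basisS m p j :
  bernstein_basis m.+1 p j.+1 =
    p * bernstein_basis m p j + (1 - p) * bernstein_basis m p j.+1.
Proof.
rewrite /bernstein_basis binS mulrnDr addrC; congr (_ + _).
  by rewrite subSS exprS -!mulrnAr mulrA.
have [j_lt|m_le] := ltnP j m; last by rewrite bin_small ?ltnS // !mulr0n mulr0.
rewrite subSS -!mulrnAr [RHS]mulrCA; congr (_ * _).
by rewrite mulrnAr -exprS subnSK.
Qed.

Lemma bernsteinS m p h :
  bernstein m.+1 p h =
    p * bernstein m p (fun j => h j.+1) + (1 - p) * bernstein m p h.
Proof.
rewrite /bernstein big_ord_recl.
under eq_bigr do rewrite /bump /= bernstein_basisS mulrDl.
rewrite big_split /= addrCA !mulr_sumr; congr (_ + _).
  by apply: eq_bigr => j _; rewrite mulrA.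
rewrite big_ord_recr [in RHS]big_ord_recl /= [bernstein_basis m p m.+1]/bernstein_basis.
rewrite bin_small // mulr0n mulr0 mul0r addr0; congr (_ + _); last first.
  by apply: eq_bigr => j _; rewrite mulrA /bump add1n.
by rewrite /bernstein_basis !expr0 !subn0 !bin0 !mul1r !mulr1n exprS mulrA.
Qed.

Lemma eq_bernstein m p h1 h2 : (forall j, (j <= m)%N -> h1 j = h2 j) ->
  bernstein m p h1 = bernstein m p h2.
Proof. by move=> h12; apply: eq_bigr => j _; rewrite h12 // -ltnS. Qed.

Lemma bernsteinB m p h1 h2 :
  bernstein m p h1 - bernstein m p h2 = bernstein m p (fun j => h1 j - h2 j).
Proof. by rewrite /bernstein -sumrB; apply: eq_bigr => j _; rewrite mulrBr. Qed.

Lemma bernstein_indicator m p a : (a <= m)%N ->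
  bernstein m p (fun j => (j == a)%:R) = bernstein_basis m p a.
Proof.
rewrite -ltnS => a_lt; rewrite /bernstein (bigD1 (Ordinal a_lt)) //= eqxx mulr1.
rewrite big1 ?addr0 // => j /negbTE j_neq.
by rewrite -[nat_of_ord j]/(val j) -[a]/(val (Ordinal a_lt)) val_eqE j_neq mulr0.
Qed.

Lemma bernstein_subr m p h :
  bernstein m (1 - p) h = bernstein m p (fun j => h (m - j)%N).
Proof.
rewrite /bernstein (reindex_inj rev_ord_inj); apply: eq_bigr => j _ /=.
have j_le : (j <= m)%N by rewrite -ltnS.
rewrite /bernstein_basis subSS subKn // bin_sub // subKr.
by rewrite [_ * p ^+ j]mulrC.
Qed.

End bernstein.

Section bernstein_poly.
Context {T : comNzRingType}.
Implicit Types (h : nat -> T).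

Lemma horner_bernstein m h x :
  (bernstein m 'X (fun j => (h j)%:P)).[x] = bernstein m x h.
Proof.
rewrite /bernstein horner_sum; apply: eq_bigr => j _.
by rewrite /bernstein_basis hornerM hornerMn hornerM hornerXn horner_exp !hornerE.
Qed.

Lemma deriv_bernstein m h :
  (bernstein m 'X (fun j => (h j)%:P))^`() =
    bernstein m.-1 'X (fun j => (h j.+1 - h j)%:P) *+ m.
Proof.
elim: m h => [|m IH] h.
  rewrite /bernstein big_ord1 /bernstein_basis !expr0 mul1r bin0 mulr1n mul1r.
  by rewrite derivC mulr0n.
rewrite bernsteinS derivD !derivM derivX derivB derivC !IH /= !derivX.
have dh m' : bernstein m' 'X (fun j => (h j.+1)%:P) - bernstein m' 'X (fun j => (h j)%:P)
    = bernstein m' 'X (fun j => (h j.+1 - h j)%:P).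
  by rewrite bernsteinB; apply: eq_bigr => j _; rewrite polyCB.
case: m IH => [|m] _; first by rewrite !mulr0n !mulr0 !addr0 -dh; ring.
have dhS : 'X * bernstein m 'X (fun j => (h j.+2 - h j.+1)%:P) +
    (1 - 'X) * bernstein m 'X (fun j => (h j.+1 - h j)%:P) =
    bernstein m.+1 'X (fun j => (h j.+1 - h j)%:P) by rewrite bernsteinS.
rewrite /= [in RHS]mulrS -[X in _ = X + _]dh -[X in _ = _ + X *+ _]dhS.
ring.
Qed.

End bernstein_poly.

Lemma bernstein_basis_rev_le (R : realFieldType) m j (x : R) :
  (j + j <= m)%N -> 0 <= x <= 2^-1 ->
  bernstein_basis m x (m - j) <= bernstein_basis m x j.
Proof.
move=> hj /andP[x0 x_half]; have jm : (j <= m)%N by lia.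
rewrite /bernstein_basis subKn // bin_sub //.
have -> : (m - j = j + (m - j - j))%N by lia.
set d := (m - j - j)%N; apply: ler_wMn2r; rewrite !exprD.
have -> : x ^+ j * x ^+ d * (1 - x) ^+ j = x ^+ j * (1 - x) ^+ j * x ^+ d by ring.
rewrite [X in _ <= X]mulrA; apply: ler_wpM2l.
  by rewrite mulr_ge0 ?exprn_ge0 // subr_ge0; lra.
by apply: lerXn2r; rewrite ?nnegrE; lra.
Qed.

Definition central_ind {R : nzRingType} (n k j : nat) : R := ((k < j < n - k)%N)%:R.

Section central_coverage.
Context {R : rcfType} {n k : nat}.
Hypothesis hk : (k.+1 <= n - k)%N.

Lemma central_ind_succB j :
  central_ind n k j.+1 - central_ind n k j = (j == k)%:R - (j == (n - k).-1)%:R :> R.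
Proof.
rewrite /central_ind.
case: (ltnP k j.+1) => h1; case: (ltnP j.+1 (n - k)) => h2;
case: (ltnP k j) => h3; case: (ltnP j (n - k)) => h4;
case: eqP => e1; case: eqP => e2 /=; rewrite ?subrr ?subr0 ?sub0r //; lia.
Qed.

Lemma central_ind_rev j : (j <= n)%N -> central_ind n k (n - j) = central_ind n k j :> R.
Proof.
move=> jn; rewrite /central_ind; congr ((nat_of_bool _)%:R).
by apply/idP/idP => /andP[? ?]; apply/andP; split; lia.
Qed.

Lemma bernstein_central_subr (p : R) :
  bernstein n (1 - p) (central_ind n k) = bernstein n p (central_ind n k).
Proof. by rewrite bernstein_subr; apply: eq_bernstein => j /central_ind_rev. Qed.

Lemma bernstein_central_nondecr :
  {in `[0, 2^-1] &, {homo (fun p : R => bernstein n p (central_ind n k)) : p q / p <= q}}.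
Proof.
move=> p q p_in q_in pq.
rewrite /= -(horner_bernstein _ _ p) -(horner_bernstein _ _ q).
apply: (ler_hornerW _ p_in q_in pq) => x x_in.
rewrite deriv_bernstein hornerMn horner_bernstein mulrn_wge0 //.
rewrite (eq_bernstein _ _ _ _ (fun j _ => central_ind_succB j)) -bernsteinB.
rewrite !bernstein_indicator ?subr_ge0; try lia.
have -> : ((n - k).-1 = n.-1 - k)%N by lia.
apply: bernstein_basis_rev_le; first by lia.
by rewrite !(itvP x_in).
Qed.

Lemma bernstein_central_le (p q : R) : 0 <= p -> p <= q -> q <= 1 - p ->
  bernstein n p (central_ind n k) <= bernstein n q (central_ind n k).
Proof.
move=> p0 pq q1.
have mem_half r : 0 <= r -> r <= 2^-1 -> r \in `[0, 2^-1].
  by move=> r0 r_half; rewrite in_itv /= r0.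
have p_in : p \in `[0, 2^-1] by apply: mem_half; lra.
have [q_half|half_q] := lerP q 2^-1.
  by apply: (bernstein_central_nondecr _ _ p_in _ pq); apply: mem_half; lra.
rewrite -(bernstein_central_subr q).
by apply: (bernstein_central_nondecr _ _ p_in); [apply: mem_half | ]; lra.
Qed.

End central_coverage.

Section probability_fine.
Context {d} {T : measurableType d} {R : realType} (G : probability T R).

Lemma probability_fineK {A : set T} : measurable A -> (fine (G A))%:E = G A.
Proof. by move=> mA; rewrite fineK // fin_num_measure. Qed.

Lemma fine_probability_itv {A : set T} : measurable A -> 0 <= fine (G A) <= 1.
Proof.
move=> mA; rewrite -!lee_fin probability_fineK //.
by rewrite measure_ge0 probability_le1.
Qed.

Lemma integral_if_cst (P : pred T) (a b : R) :
  measurable [set x | P x] -> 0 <= a -> 0 <= b ->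
  (\int[G]_x (if P x then a else b)%:E =
   (a * fine (G [set x | P x]) + b * (1 - fine (G [set x | P x])))%:E)%E.
Proof.
set A := [set x | P x] => mA a0 b0; have mAc := measurableC mA.
rewrite -(setUv A) ge0_integral_setU //; last 3 first.
- rewrite setUv; apply/measurable_EFinP/measurable_fun_ifT => //.
  by apply: (measurable_fun_bool true); rewrite setTI.
- by move=> x _ /=; case: ifP.
- by rewrite disj_set2E setICr.
rewrite (@eq_integral _ _ _ _ _ (cst a%:E)); last first.
  by move=> x; rewrite inE /A /= => ->.
rewrite [X in (_ + X)%E](@eq_integral _ _ _ _ _ (cst b%:E)); last first.
  by move=> x; rewrite inE /A /= => /negP/negbTE ->.
rewrite !integral_cst //.
have GAc : G (~` A) = (1 - G A)%E by exact: probability_setC.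
rewrite [X in (_ + _ * X)%E]GAc -[X in (_ * X + _)%E](probability_fineK mA).
by rewrite -[X in (_ - X)%E](probability_fineK mA) -EFinB -!EFinM -EFinD.
Qed.

End probability_fine.

Section iid_count.
Context {R : realType} (G : probability R R).

Lemma eq_iid_int m (f g : seq R -> \bar R) :
  (forall s, size s = m -> f s = g s) -> iid_int G m f = iid_int G m g.
Proof.
elim: m f g => [|m IH] f g fg /=; first exact: fg.
by apply: eq_integral => x _; apply: IH => s s_m; apply: fg; rewrite /= s_m.
Qed.

Lemma iid_int_count (P : pred R) m (h : nat -> R) :
  measurable [set x | P x] -> (forall j, 0 <= h j) ->
  iid_int G m (fun s => (h (count P s))%:E) =
  (bernstein m (fine (G [set x | P x])) h)%:E.
Proof.
move=> mP; set p := fine _; have /andP[p0 p1] := fine_probability_itv G mP.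
have bernstein_ge0 m' h' : (forall j, 0 <= h' j) -> 0 <= bernstein m' p h'.
  move=> h'0; apply: sumr_ge0 => j _; apply: mulr_ge0 => //.
  by apply: (binomial_pmf_ge0 m' j); rewrite p0 p1.
elim: m h => [|m IH] h h0 /=.
  by rewrite /bernstein big_ord1 /bernstein_basis !expr0 mul1r mulr1n mul1r.
transitivity (\int[G]_x (if P x then bernstein m p (fun j => h j.+1)
                          else bernstein m p h)%:E)%E.
  apply: eq_integral => x _; rewrite (IH (fun j => h (P x + j)%N)) //.
  by case: (P x).
by rewrite integral_if_cst ?bernstein_ge0 // bernsteinS -/p mulrC [X in _ + X]mulrC.
Qed.

Lemma iid_prob_ci_event n k theta : (k.+1 <= n - k)%N ->
  iid_prob G n (ci_event n k theta) =
  (bernstein n (fine (G [set x | x <= theta])) (central_ind n k))%:E.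
Proof.
move=> hk; rewrite /iid_prob -iid_int_count //; last first.
  by rewrite -set_itvNyc; exact: measurable_itv.
by apply: eq_iid_int => s s_n; rewrite ci_eventE // /central_ind; case: ifP.
Qed.

End iid_count.

Lemma binomial_prob_bernstein (R : realType) n (q : R) (U : set nat) :
  0 <= q <= 1 -> fine (binomial_prob n q U) = bernstein n q (fun j => (j \in U)%:R).
Proof.
case/andP => q0 q1; rewrite (@binomial_probE R n q q0 q1).
under eq_bigr do rewrite diracE -EFinM.
by rewrite sumEFin.
Qed.

Lemma one_sub_alpha_star (R : realType) n k (eps : R) : 0 <= eps -> eps <= 1 ->
  1 - alpha_star n k eps = bernstein n ((1 - eps) / 2) (central_ind n k).
Proof.
move=> eps0 eps1; rewrite /alpha_star subKr binomial_prob_bernstein; last first.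
  by apply/andP; split; lra.
apply: eq_bernstein => j _; rewrite /central_ind.
case: (boolP (k < j < n - k)%N) => hj; first by rewrite mem_set.
by rewrite memNset //; apply/negP.
Qed.

Section mixture.
Context {d} {T : measurableType d} {R : realType} (mu nu : probability T R) {e : R}.
Hypotheses (e0 : 0 <= e) (e1 : e <= 1).

Let onem_e_ge0 : 0 <= 1 - e. Proof. by rewrite subr_ge0. Qed.

Definition mixture_measure : set T -> \bar R :=
  measure_add (mscale (NngNum onem_e_ge0) mu) (mscale (NngNum e0) nu).

(* A fresh head symbol, so that the probability instance below can be declared. *)
Definition mixture_fun (A : set T) : \bar R := mixture_measure A.

HB.instance Definition _ := isMeasure.Build _ _ _ mixture_fun
  (measure0 mixture_measure) (measure_ge0 mixture_measure)
  (@measure_semi_sigma_additive _ _ _ mixture_measure).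

Lemma mixtureE A : mixture_fun A = ((1 - e)%:E * mu A + e%:E * nu A)%E.
Proof. by rewrite /mixture_fun /mixture_measure measure_addE. Qed.

Let mixture_setT : mixture_fun setT = 1%E.
Proof. by rewrite mixtureE !probability_setT !mule1 -EFinD subrK. Qed.

HB.instance Definition _ :=
  Measure_isProbability.Build _ _ _ mixture_fun mixture_setT.

Definition mixture : probability T R := mixture_fun.

End mixture.

Lemma contam_fine {R : realType} {eps : R} {F H G : probability R R} :
  is_contam eps F H G -> forall A, measurable A ->
  fine (G A) = (1 - eps) * fine (F A) + eps * fine (H A).
Proof.
move=> GFH A mA; rewrite GFH // -(probability_fineK F mA) -(probability_fineK H mA).
by rewrite -!EFinM -EFinD.
Qed.

Section contaminated_coverage.
Context {R : realType} {F : probability R R} {theta eps : R} {n k : nat}.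
Hypotheses (F_median : fine (F [set x | x <= theta]) = 2^-1)
  (eps0 : 0 <= eps) (eps1 : eps <= 1) (hk : (k.+1 <= n - k)%N).

Local Notation lower := [set x : R | x <= theta].

Let measurable_lower : measurable lower.
Proof. by rewrite -set_itvNyc; exact: measurable_itv. Qed.

Lemma coverage_contam {H G : probability R R} : is_contam eps F H G ->
  iid_prob G n (ci_event n k theta) =
  (bernstein n ((1 - eps) / 2 + eps * fine (H lower)) (central_ind n k))%:E.
Proof.
by move=> GFH; rewrite iid_prob_ci_event // (contam_fine GFH) // F_median.
Qed.

Lemma coverage_contam_ge {H G : probability R R} : is_contam eps F H G ->
  ((1 - alpha_star n k eps)%:E <= iid_prob G n (ci_event n k theta))%E.
Proof.
move=> GFH; rewrite (coverage_contam GFH) one_sub_alpha_star // lee_fin.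
have /andP[h0 h1] := fine_probability_itv H measurable_lower.
apply: (bernstein_central_le hk); first by rewrite divr_ge0 // subr_ge0.
  by rewrite lerDl mulr_ge0.
by have := ler_wpM2l eps0 h1; rewrite mulr1; lra.
Qed.

Lemma coverage_contam_one_sided (H G : probability R R) :
  H lower = 1%E \/ H [set x | theta < x] = 1%E -> is_contam eps F H G ->
  iid_prob G n (ci_event n k theta) = (1 - alpha_star n k eps)%:E.
Proof.
move=> H_one_sided GFH; rewrite (coverage_contam GFH) one_sub_alpha_star //.
case: H_one_sided => [H_lower|H_upper].
  rewrite H_lower /= mulr1 -bernstein_central_subr //; congr (bernstein _ _ _)%:E.
  lra.
have upperE : [set x | theta < x] = ~` lower.
  by apply/seteqP; split => x /=; rewrite ltNge => /negP.
have : H (~` lower) = (1 - H lower)%E by exact: probability_setC.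
rewrite -upperE H_upper -(probability_fineK H measurable_lower) -EFinB => -[H_lower].
have -> : fine (H lower) = 0 by lra.
by rewrite mulr0 addr0.
Qed.

End contaminated_coverage.

Theorem theorem1 (R : realType) (F : probability R R) (theta eps : R) (n k : nat)
  (hF : A1_median F theta) (heps0 : 0 <= eps) (heps1 : eps < 2^-1)
  (hn : (1 <= n)%N) (hk : (k.+1 <= n - k)%N) :
  (* (a) *)
  ereal_inf [set p | exists G : probability R R,
                in_contam_nbhd eps F G /\ p = iid_prob G n (ci_event n k theta)]
    = (1 - alpha_star n k eps)%:E
  /\
  (* (b) *)
  (forall H G : probability R R,
     (H [set x | x <= theta] = 1%E \/ H [set x | theta < x] = 1%E) ->
     is_contam eps F H G ->
     iid_prob G n (ci_event n k theta) = (1 - alpha_star n k eps)%:E).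
Proof.
have F_median : fine (F [set x | x <= theta]) = 2^-1 by apply/(proj2 hF theta).
have eps1 : eps <= 1 by lra.
split; last exact: coverage_contam_one_sided.
pose H0 : probability R R := \d_(theta + 1).
have H0_upper : H0 [set x | theta < x] = 1%E.
  transitivity ((theta + 1 \in [set x | theta < x])%:R%:E : \bar R); first exact: diracE.
  by rewrite mem_set //=; lra.
pose G0 : probability R R := mixture F H0 heps0 eps1.
have G0_contam : is_contam eps F H0 G0 by move=> A _; exact: mixtureE.
apply/le_anti/andP; split.
- apply: ereal_inf_lbound; exists G0; split; first by exists H0.
  by rewrite (coverage_contam_one_sided F_median heps0 eps1 hk _ _ (or_intror H0_upper)).
- apply: le_ereal_inf_tmp => _ [G [[H GFH] ->]].
  exact: coverage_contam_ge GFH.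
Qed.
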